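(* Let $\varphi\colon G\to G$ be an endomorphism of an abelian group $G$ and let $n\in\mathbb N$, $n\neq 0$. Then $\varphi$ is positively expansive if and only if $\varphi^n$ is positively expansive. Analogously, if $\varphi$ is an automorphism, then $\varphi$ is expansive if and only if $\varphi^n$ is expansive.
   Context: $\mathbb N=\{0,1,2,\dots\}$. An endomorphism $\varphi$ of an abelian group $G$ is positively expansive if there is a finite subgroup $S\leq G$ such that for every finite subgroup $F\leq G$ there is $m\in\mathbb N$ with $F\subseteq\sum_{k=0}^m\varphi^kS$. An automorphism $\varphi$ is expansive if there is a finite subgroup $S\leq G$ such that for every finite subgroup $F\leq G$ there is $m\in\mathbb N$ with $F\subseteq\sum_{|k|\leq m}\varphi^kS$. *)

From mathcomp Require Import all_boot all_order all_algebra.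
Set Implicit Arguments. Unset Strict Implicit. Unset Printing Implicit Defensive.
Import GRing.Theory.
Local Open Scope ring_scope.

Definition is_subgroup (G : zmodType) (S : G -> Prop) : Prop :=
  S 0 /\ forall x y, S x -> S y -> S (x - y).

Definition finite_subset (G : zmodType) (S : G -> Prop) : Prop :=
  exists s : seq G, forall x, S x -> x \in s.

Definition fin_subgroup (G : zmodType) (S : G -> Prop) : Prop :=
  is_subgroup S /\ finite_subset S.

Definition pos_orbit_sum (G : zmodType) (phi : G -> G) (S : G -> Prop)
    (m : nat) (x : G) : Prop :=
  exists f : nat -> G, (forall k, S (f k)) /\
    x = \sum_(k < m.+1) iter k phi (f k).

Definition pos_expansive (G : zmodType) (phi : G -> G) : Prop :=
  exists S : G -> Prop, fin_subgroup S /\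
    forall F : G -> Prop, fin_subgroup F ->
      exists m : nat, forall x, F x -> pos_orbit_sum phi S m x.

Definition zpow (G : zmodType) (phi psi : G -> G) (k : int) : G -> G :=
  match k with
  | Posz n => iter n phi
  | Negz n => iter n.+1 psi
  end.

(* x \in \sum_{|k| <= m} phi^k S ; the index i < 2m+1 stands for k = i - m *)
Definition orbit_sum (G : zmodType) (phi psi : G -> G) (S : G -> Prop)
    (m : nat) (x : G) : Prop :=
  exists f : nat -> G, (forall k, S (f k)) /\
    x = \sum_(i < (m.*2).+1) zpow phi psi (i%:Z - m%:Z) (f i).

(* expansive automorphism phi, whose inverse is psi *)
Definition expansive (G : zmodType) (phi psi : G -> G) : Prop :=
  exists S : G -> Prop, fin_subgroup S /\
    forall F : G -> Prop, fin_subgroup F ->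
      exists m : nat, forall x, F x -> orbit_sum phi psi S m x.

From mathcomp Require Import all_boot all_order all_algebra.
From mathcomp Require Import zify.
Set Implicit Arguments. Unset Strict Implicit. Unset Printing Implicit Defensive.
Import GRing.Theory Num.Theory.
Local Open Scope ring_scope.

(* Write O_m(phi, S) for the orbit sum of phi over S and the window W_m,
   which is [0, m] in the positive case and [-m, m] in the two-sided one.
   A witness S for phi^n is one for phi, since O_m(phi^n, S) <= O_(mn)(phi, S):
   each summand phi^(nk) S is a summand of the right-hand side.  Conversely,
   if S is a witness for phi, then S' = S + phi S + ... + phi^(n-1) S is one
   for phi^n, since O_m(phi, S) <= O_m(phi^n, S'): every j in W_m is kn + i
   with k in W_m and 0 <= i < n, so phi^j S = phi^(nk) (phi^i S) <= phi^(nk) S'.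
   Both inclusions are checked summand by summand, as a sum of subgroups lies
   in every subgroup containing each summand. *)

Section Subgroup.
Variables (G : zmodType) (H : G -> Prop).
Hypothesis H_subgroup : is_subgroup H.

Lemma subgroup0 : H 0.
Proof. by case: H_subgroup. Qed.

Lemma subgroupN x : H x -> H (- x).
Proof. by case: H_subgroup => H0 HB Hx; rewrite -sub0r; apply: HB. Qed.

Lemma subgroupD x y : H x -> H y -> H (x + y).
Proof.
by case: H_subgroup => _ HB Hx Hy; rewrite -[y]opprK; apply/HB/subgroupN.
Qed.

End Subgroup.

Lemma zmod_morphism0 (U V : zmodType) (f : U -> V) : zmod_morphism f -> f 0 = 0.
Proof. by move=> fB; rewrite -(subrr 0) fB subrr. Qed.

Lemma iter_zmod_morphism (U : zmodType) (f : U -> U) k :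
  zmod_morphism f -> zmod_morphism (iter k f).
Proof. by move=> fB; elim: k => [|k IH] x y //=; rewrite IH fB. Qed.

Section Sumset.
Variables (G : zmodType) (I : eqType) (T : I -> G -> G) (S : G -> Prop).

Definition sumset (r : seq I) (x : G) : Prop :=
  exists f : I -> G, (forall i, S (f i)) /\ x = \sum_(i <- r) T i (f i).

Lemma sumset_min (H : G -> Prop) r :
  is_subgroup H -> (forall i a, i \in r -> S a -> H (T i a)) ->
  forall x, sumset r x -> H x.
Proof.
move=> H_subgroup HT x [f [Sf ->]]; rewrite big_seq.
apply: big_ind => [|y z|i ri]; first exact: subgroup0.
  exact: subgroupD.
exact: HT.
Qed.

Hypotheses (T_morph : forall i, zmod_morphism (T i))
  (S_subgroup : is_subgroup S).

Lemma sumset_subgroup r : is_subgroup (sumset r).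
Proof.
split.
  exists (fun=> 0); split=> [i|]; first exact: subgroup0.
  by rewrite big1 // => i _; apply: zmod_morphism0.
move=> _ _ [f [Sf ->]] [g [Sg ->]]; exists (fun i => f i - g i); split.
  by move=> i; case: S_subgroup => _; apply.
by rewrite -sumrB; apply: eq_bigr => i _; rewrite T_morph.
Qed.

Lemma sumset_finite r : finite_subset S -> finite_subset (sumset r).
Proof.
move=> [s Ss]; elim: r => [|i r [e IH]].
  by exists [:: 0] => x [f [_ ->]]; rewrite big_nil mem_seq1.
exists [seq T i a + y | a <- s, y <- e] => x [f [Sf ->]].
by rewrite big_cons; apply: allpairs_f; [apply: Ss | apply: IH; exists f].
Qed.

Lemma sumset_mem r i a : uniq r -> i \in r -> S a -> sumset r (T i a).
Proof.
move=> r_uniq ri Sa; exists (fun j => if j == i then a else 0); split.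
  by move=> j; case: eqP => _ //; apply: subgroup0.
rewrite (bigD1_seq i) //= eqxx big1 ?addr0 // => j /negPf ->.
exact: zmod_morphism0.
Qed.

End Sumset.

Lemma fin_subgroup_sumset (G : zmodType) (I : eqType) (T : I -> G -> G) S r :
  (forall i, zmod_morphism (T i)) -> fin_subgroup S ->
  fin_subgroup (sumset T S r).
Proof.
move=> T_morph [S_subgroup fS].
by split; [apply: sumset_subgroup | apply: sumset_finite].
Qed.

Section ExpansiveWrt.
Variable G : zmodType.

(* O S m is the orbit sum of a fixed map over the window of radius m. *)
Definition expansive_wrt (O : (G -> Prop) -> nat -> G -> Prop) : Prop :=
  exists S : G -> Prop, fin_subgroup S /\
    forall F : G -> Prop, fin_subgroup F ->
      exists m : nat, forall x, F x -> O S m x.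

Lemma expansive_wrt_transfer O O' (sigma : (G -> Prop) -> G -> Prop)
    (mu : nat -> nat) :
  (forall S, fin_subgroup S -> fin_subgroup (sigma S)) ->
  (forall S m x, fin_subgroup S -> O S m x -> O' (sigma S) (mu m) x) ->
  expansive_wrt O -> expansive_wrt O'.
Proof.
move=> sigma_fin O_sub [S [fS HS]].
exists (sigma S); split; first exact: sigma_fin.
by move=> F /HS [m Hm]; exists (mu m) => x /Hm; apply: O_sub.
Qed.

End ExpansiveWrt.

Lemma pos_orbit_sumE (G : zmodType) (f : G -> G) S m x :
  pos_orbit_sum f S m x <->
  sumset (fun k : nat => iter k f) S (index_iota 0 m.+1) x.
Proof. by split=> -[g [Sg ->]]; exists g; split=> //; rewrite big_mkord. Qed.

Section PositiveOrbits.
Variables (G : zmodType) (phi : {additive G -> G}) (n : nat).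

Let iter_phiB k : zmod_morphism (iter k phi).
Proof. exact/iter_zmod_morphism/raddfB. Qed.

Let iter_phinB k : zmod_morphism (iter k (iter n phi)).
Proof. exact/iter_zmod_morphism/iter_zmod_morphism/raddfB. Qed.

Lemma pos_orbit_sum_iter S m x : is_subgroup S ->
  pos_orbit_sum (iter n phi) S m x -> pos_orbit_sum phi S (m * n) x.
Proof.
move=> S_subgroup; rewrite !pos_orbit_sumE.
apply: sumset_min; first exact: sumset_subgroup.
move=> k a; rewrite mem_index_iota => /andP[_ km] Sa; rewrite /= -iterM.
by apply: sumset_mem; rewrite ?iota_uniq ?mem_index_iota //; nia.
Qed.

Lemma pos_orbit_sum_blocks S m x : (0 < n)%N -> is_subgroup S ->
  pos_orbit_sum phi S m x ->
  pos_orbit_sum (iter n phi)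
    (sumset (fun k : nat => iter k phi) S (index_iota 0 n)) m x.
Proof.
move=> n_gt0 S_subgroup; rewrite !pos_orbit_sumE.
apply: sumset_min; first by do 2 apply: sumset_subgroup => //.
move=> j a; rewrite mem_index_iota => /andP[_ jm] Sa.
rewrite /= (divn_eq j n) iterD iterM.
apply: sumset_mem => //.
- exact: sumset_subgroup.
- exact: iota_uniq.
- by rewrite mem_index_iota /= (leq_ltn_trans (leq_div j n)).
- by apply: sumset_mem; rewrite ?iota_uniq ?mem_index_iota ?ltn_pmod.
Qed.

Lemma pos_expansive_iter :
  (0 < n)%N -> pos_expansive phi -> pos_expansive (iter n phi).
Proof.
move=> n_gt0; apply: (expansive_wrt_transfer (mu := id)
  (sigma := fun S => sumset (fun k : nat => iter k phi) S (index_iota 0 n))).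
  by move=> S; apply: fin_subgroup_sumset.
by move=> S m x [S_subgroup _]; apply: pos_orbit_sum_blocks.
Qed.

Lemma pos_expansive_of_iter : pos_expansive (iter n phi) -> pos_expansive phi.
Proof.
apply: (expansive_wrt_transfer (sigma := id) (mu := muln^~ n)) => // S m x.
by case=> S_subgroup _; apply: pos_orbit_sum_iter.
Qed.

End PositiveOrbits.

Section Zpow.
Variables (G : zmodType) (f g : G -> G).

Lemma zpow_zmod_morphism k :
  zmod_morphism f -> zmod_morphism g -> zmod_morphism (zpow f g k).
Proof. by case: k => i fB gB /=; apply: iter_zmod_morphism. Qed.

Lemma zpow_iterM n k :
  (0 < n)%N -> zpow (iter n f) (iter n g) k =1 zpow f g (k * n%:Z).
Proof.
move=> n_gt0 y; case: k => i; first by rewrite /= iterM.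
have -> : Negz i * n%:Z = Negz (i.+1 * n).-1.
  by rewrite !NegzE prednK ?muln_gt0 //; lia.
by rewrite /zpow prednK ?muln_gt0 // iterM.
Qed.

Hypothesis fK : cancel f g.

Lemma zpowS k y : zpow f g (k + 1) y = zpow f g k (f y).
Proof.
case: k => [i|[|i]].
- by rewrite /= addn1 iterSr.
- by rewrite /= fK.
- have -> : Negz i.+1 + 1 = Negz i by rewrite !NegzE; lia.
  by rewrite /zpow (iterSr i.+1) fK.
Qed.

Lemma zpowDn k (i : nat) y : zpow f g (k + i%:Z) y = zpow f g k (iter i f y).
Proof.
elim: i k y => [|i IH] k y; first by rewrite addr0.
by rewrite -addn1 PoszD addrA zpowS IH iterD.
Qed.

End Zpow.

Definition window (m : nat) : seq int :=
  [seq i%:Z - m%:Z | i <- index_iota 0 (m.*2).+1].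

Lemma mem_window m k : (k \in window m) = (- m%:Z <= k <= m%:Z).
Proof.
apply/mapP/idP => [[i] | k_bounded].
  by rewrite mem_index_iota => /andP[_ i_lt] ->; lia.
by exists (absz (k + m%:Z)); rewrite ?mem_index_iota; lia.
Qed.

Lemma window_uniq m : uniq (window m).
Proof. by rewrite map_inj_uniq ?iota_uniq // => i j; lia. Qed.

Lemma orbit_sumE (G : zmodType) (f g : G -> G) S m x :
  orbit_sum f g S m x <-> sumset (zpow f g) S (window m) x.
Proof.
rewrite /orbit_sum /sumset /window; split=> -[h [Sh ->]].
  exists (fun k => h (absz (k + m%:Z))); split=> //.
  by rewrite big_map big_mkord; apply: eq_bigr => i _; rewrite subrK.
exists (fun i : nat => h (i%:Z - m%:Z)); split=> //.
by rewrite big_map big_mkord.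
Qed.

Section Automorphism.
Variables (G : zmodType) (phi : {additive G -> G}) (psi : G -> G) (n : nat).
Hypotheses (phiK : cancel phi psi) (psiK : cancel psi phi) (n_gt0 : (0 < n)%N).

Let zpow_phiB k : zmod_morphism (zpow phi psi k).
Proof. exact/zpow_zmod_morphism/(can2_zmod_morphism phiK psiK)/raddfB. Qed.

Let zpow_phinB k : zmod_morphism (zpow (iter n phi) (iter n psi) k).
Proof. by move=> x y; rewrite !zpow_iterM // zpow_phiB. Qed.

Let iter_phiB k : zmod_morphism (iter k phi).
Proof. exact/iter_zmod_morphism/raddfB. Qed.

Lemma orbit_sum_iter S m x : is_subgroup S ->
  orbit_sum (iter n phi) (iter n psi) S m x -> orbit_sum phi psi S (m * n) x.
Proof.
move=> S_subgroup; rewrite !orbit_sumE.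
apply: sumset_min; first exact: sumset_subgroup.
move=> k a; rewrite mem_window => k_bounded Sa; rewrite zpow_iterM //.
by apply: sumset_mem; rewrite ?window_uniq ?mem_window //; nia.
Qed.

Lemma orbit_sum_blocks S m x : is_subgroup S ->
  orbit_sum phi psi S m x ->
  orbit_sum (iter n phi) (iter n psi)
    (sumset (fun k : nat => iter k phi) S (index_iota 0 n)) m x.
Proof.
move=> S_subgroup; rewrite !orbit_sumE.
apply: sumset_min; first by do 2 apply: sumset_subgroup => //.
move=> j a; rewrite mem_window => j_bounded Sa.
have n_neq0 : n%:Z != 0 by lia.
have r_ge0 : 0 <= (j %% n%:Z)%Z by apply: modz_ge0.
have r_lt : (j %% n%:Z < n%:Z)%Z by apply: ltz_pmod; lia.
have -> : j = (j %/ n%:Z)%Z * n%:Z + absz (j %% n%:Z)%Z.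
  by rewrite gez0_abs // -divz_eq.
rewrite zpowDn // -zpow_iterM //.
apply: sumset_mem => //.
- exact: sumset_subgroup.
- exact: window_uniq.
- by rewrite mem_window; nia.
- by apply: sumset_mem; rewrite ?iota_uniq ?mem_index_iota //; lia.
Qed.

Lemma expansive_iter :
  expansive phi psi -> expansive (iter n phi) (iter n psi).
Proof.
apply: (expansive_wrt_transfer (mu := id)
  (sigma := fun S => sumset (fun k : nat => iter k phi) S (index_iota 0 n))).
  by move=> S; apply: fin_subgroup_sumset.
by move=> S m x [S_subgroup _]; apply: orbit_sum_blocks.
Qed.

Lemma expansive_of_iter :
  expansive (iter n phi) (iter n psi) -> expansive phi psi.
Proof.
apply: (expansive_wrt_transfer (sigma := id) (mu := muln^~ n)) => // S m x.
by case=> S_subgroup _; apply: orbit_sum_iter.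
Qed.

End Automorphism.

Theorem proposition2p10 (G : zmodType) (phi : {additive G -> G}) (n : nat) :
  (0 < n)%N ->
  (pos_expansive phi <-> pos_expansive (iter n phi)) /\
  (forall psi : G -> G, cancel phi psi -> cancel psi phi ->
     (expansive phi psi <-> expansive (iter n phi) (iter n psi))).
Proof.
move=> n_gt0; split.
  by split; [exact: pos_expansive_iter | exact: pos_expansive_of_iter].
move=> psi phiK psiK.
by split; [exact: expansive_iter | exact: expansive_of_iter].
Qed.
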